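(* Let $(X,\sigma,T)$ be as in the context and let $\pi^L_{eq}:L\to L_{eq}$ be the maximal equicontinuous factor of the minimal system $(L,\sigma_L)$, with the group structure on $L_{eq}$ chosen so that $e_{eq}:=\pi^L_{eq}(e)$ is the neutral element. Then $\pi^L_{eq}$ is a semigroup morphism, $\pi^L_{eq}(f)=\pi^L_{eq}(ef)$ for all $f\in L$, and there is a closed normal subgroup $H$ of $\mathcal G$ with $\Gamma\subset H$ such that $\pi^L_{eq}(f)\mapsto efH$ is a well-defined group isomorphism $L_{eq}\cong \mathcal G/H$; i.e. the map $L\ni f\mapsto ef \bmod H\in\mathcal G/H$ is a maximal equicontinuous factor of $(L,\sigma_L)$.
   Context: $T$ is an abelian group acting continuously by $\sigma$ on a compact Hausdorff space $X$; the action is minimal and not distal. The Ellis semigroup $E(X)$ is the closure of $\{\sigma^t:t\in T\}$ in $X^X$ (pointwise convergence, composition), with $T$-action $\sigma_E^t(f)=\sigma^t\circ f$. Fix a minimal idempotent $e\in E(X)$, put $L=E(X)e$ (a minimal left ideal; $\sigma_L$ denotes the restriction of $\sigma_E$ to $L$, and $(L,\sigma_L)$ is minimal) and $\mathcal G=eL=eE(X)e$ (a group with identity $e$), with the subspace topology. The kernel (smallest two-sided ideal) of $E(X)$ is completely simple, hence isomorphic to a Rees matrix semigroup with structure group $\mathcal G$; the little structure group $\Gamma\subset \mathcal G$ is the subgroup generated by the entries of its sandwich matrix; equivalently $\Gamma$ is the intersection of $\mathcal G$ with the closure of the subsemigroup generated by the minimal idempotents of $E(X)$. *)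

From HB Require Import structures.
From mathcomp Require Import all_boot all_order all_algebra.
From mathcomp Require Import all_classical all_reals topology.
Set Implicit Arguments. Unset Strict Implicit. Unset Printing Implicit Defensive.
Import GRing.Theory.
Local Open Scope classical_set_scope.
Local Open Scope ring_scope.

Section Dynamics.
Context {T : zmodType}.

Definition is_action (Y : Type) (s : T -> Y -> Y) : Prop :=
  (forall y, s 0 y = y) /\ (forall (a b : T) y, s (a + b) y = s a (s b y)).

Definition continuous_action (Y : topologicalType) (s : T -> Y -> Y) : Prop :=
  is_action s /\ forall t, continuous (s t).

Definition minimal_action (Y : topologicalType) (s : T -> Y -> Y) : Prop :=
  forall A : set Y, closed A -> A !=set0 ->
    (forall t y, A y -> A (s t y)) -> A = setT.

(* x,y proximal: the orbit closure of (x,y) in Y x Y meets the diagonal *)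
Definition proximal (Y : topologicalType) (s : T -> Y -> Y) (x y : Y) : Prop :=
  exists z : Y, forall U, nbhs z U -> exists t, U (s t x) /\ U (s t y).

Definition distal (Y : topologicalType) (s : T -> Y -> Y) : Prop :=
  forall x y, proximal s x y -> x = y.

Definition equicontinuous_action (Y : uniformType) (s : T -> Y -> Y) : Prop :=
  forall U, entourage U -> exists2 V, entourage V &
    forall t y z, V (y, z) -> U (s t y, s t z).

Section Ellis.
Context {X : topologicalType} (s : T -> X -> X).

Definition ptws_closure (A : set (X -> X)) : set (X -> X) :=
  @closure {ptws X -> X} A.

Definition Ellis : set (X -> X) := ptws_closure (range s).

Definition left_ideal (I : set (X -> X)) : Prop :=
  I `<=` Ellis /\ I !=set0 /\ (forall f g, Ellis f -> I g -> I (f \o g)).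

Definition minimal_left_ideal (I : set (X -> X)) : Prop :=
  left_ideal I /\ forall J, left_ideal J -> J `<=` I -> J = I.

Definition minimal_idempotent (e : X -> X) : Prop :=
  Ellis e /\ e \o e = e /\ exists I, minimal_left_ideal I /\ I e.

Definition Lideal (e : X -> X) : set (X -> X) := [set f \o e | f in Ellis].
Definition Egroup (e : X -> X) : set (X -> X) := [set e \o f | f in Lideal e].

Definition minidem_semigroup : set (X -> X) :=
  [set f | forall S : set (X -> X), minimal_idempotent `<=` S ->
     (forall g h, S g -> S h -> S (g \o h)) -> S f].

Definition Gamma (e : X -> X) : set (X -> X) :=
  Egroup e `&` ptws_closure minidem_semigroup.

Definition closed_normal_subgroup (e : X -> X) (H : set (X -> X)) : Prop :=
  let G := Egroup e in
  H `<=` G /\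
  (exists C : set {ptws X -> X}, closed C /\ H = G `&` C) /\
  H e /\
  (forall h k, H h -> H k -> H (h \o k)) /\
  (forall h g, H h -> G g -> g \o h = e -> H g) /\
  (forall h g g', H h -> G g -> G g' -> g \o g' = e -> H (g \o h \o g')).

Definition factor_of_L (e : X -> X) (Z : uniformType) (sZ : T -> Z -> Z)
    (rho : (X -> X) -> Z) : Prop :=
  compact [set: Z] /\ hausdorff_space Z /\ continuous_action sZ /\
  {within (Lideal e : set {ptws X -> X}), continuous (rho : {ptws X -> X} -> Z)} /\
  rho @` Lideal e = setT /\
  (forall t f, Lideal e f -> rho (s t \o f) = sZ t (rho f)).

Definition equicontinuous_factor_of_L (e : X -> X) (Z : uniformType)
    (sZ : T -> Z -> Z) (rho : (X -> X) -> Z) : Prop :=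
  factor_of_L e sZ rho /\ equicontinuous_action sZ.

Definition max_equicontinuous_factor_of_L (e : X -> X) (Y : uniformType)
    (sY : T -> Y -> Y) (pi : (X -> X) -> Y) : Prop :=
  equicontinuous_factor_of_L e sY pi /\
  forall (Z : uniformType) (sZ : T -> Z -> Z) (rho : (X -> X) -> Z),
    equicontinuous_factor_of_L e sZ rho ->
    exists psi : Y -> Z, continuous psi /\
      forall f, Lideal e f -> rho f = psi (pi f).

End Ellis.

Definition rotation_group_structure (Y : uniformType) (sY : T -> Y -> Y)
    (add : Y -> Y -> Y) (opp : Y -> Y) (y0 : Y) : Prop :=
  (forall a b c, add a (add b c) = add (add a b) c) /\
  (forall a b, add a b = add b a) /\
  (forall a, add y0 a = a) /\
  (forall a, add (opp a) a = y0) /\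
  continuous (fun p : Y * Y => add p.1 p.2) /\
  continuous opp /\
  (forall t y, sY t y = add (sY t y0) y).

End Dynamics.

From HB Require Import structures.
From mathcomp Require Import all_boot all_order all_algebra.
From mathcomp Require Import all_classical all_reals topology.
Local Open Scope classical_set_scope.

(* Right composition q |-> q \o h is continuous on E(X), and the translations
   s t act on L compatibly with the rotations of Y; density of the translations
   in E(X) therefore propagates the identity
   pi (phi \o h) = pi (phi \o e) + pi h from phi = s t to every phi in E(X).
   Taking phi in L gives the morphism property, taking phi = e gives
   pi f = pi (e \o f).  The kernel H of pi on the group G = eL is then a closed
   normal subgroup; it contains every minimal idempotent (an idempotent of Y is
   neutral), hence Gamma; and since G is a group, pi f = pi g exactly when
   (e \o g)^-1 \o (e \o f) lies in H. *)

Lemma hausdorff_eq_closure (P Z : topologicalType) (A D : set P) (p : P)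
    (F1 F2 : P -> Z) :
  hausdorff_space Z -> D `<=` A -> closure D p ->
  F1 @ within A (nbhs p) --> F1 p -> F2 @ within A (nbhs p) --> F2 p ->
  {in D, F1 =1 F2} -> F1 p = F2 p.
Proof.
move=> hZ DA clD h1 h2 eqD; apply: hZ => U V hU hV.
have W1 : nbhs p [set y | A y -> U (F1 y)] := h1 _ hU.
have W2 : nbhs p [set y | A y -> V (F2 y)] := h2 _ hV.
have [d [Dd [/(_ (DA _ Dd)) Ud /(_ (DA _ Dd)) Vd]]] := clD _ (filterI W1 W2).
by exists (F1 d); split => //; rewrite eqD ?inE.
Qed.

Lemma closure_image_sub (P : topologicalType) (Phi : P -> P) (A B : set P) :
  (forall p, closure A p -> Phi @ nbhs p --> Phi p) ->
  Phi @` A `<=` B -> forall p, closure A p -> closure B (Phi p).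
Proof.
move=> hc hAB p cp U hU.
have [a [Aa Ua]] := cp _ (hc _ cp _ hU).
by exists (Phi a); split => //; apply: hAB; exists a.
Qed.

Lemma within_comp_cvg (P Y Z : topologicalType) (L A : set P) (G : P -> P)
    (pi : P -> Y) (K : Y -> Z) (p : P) :
  G @ nbhs p --> G p -> {within L, continuous pi} -> L (G p) ->
  (forall y, A y -> L (G y)) -> K @ nbhs (pi (G p)) --> K (pi (G p)) ->
  (fun y => K (pi (G y))) @ within A (nbhs p) --> K (pi (G p)).
Proof.
move=> hG /subspace_continuousP hpi LGp AL hK U hU.
have h2 : nbhs (G p) [set y | L y -> U (K (pi y))] := hpi _ LGp _ (hK _ hU).
have h3 : nbhs p [set y | L (G y) -> U (K (pi (G y)))] := hG _ h2.
apply: filterS h3 => y /= H Ay; exact: H (AL _ Ay).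
Qed.

Section PointwiseComposition.
Variable X : topologicalType.

Lemma ptws_cvg_coord (Phi : {ptws X -> X} -> {ptws X -> X}) (p : {ptws X -> X}) :
  (forall x, (fun q => Phi q x) @ nbhs p --> Phi p x) -> Phi @ nbhs p --> Phi p.
Proof.
move=> h; apply/cvg_sup => i U [V] [[W] oW <-] WfN WU.
apply: (filterS WU); apply: (h i); exact: open_nbhs_nbhs.
Qed.

Lemma ptws_rcomp_cvg (k : X -> X) (p : {ptws X -> X}) :
  (fun q : {ptws X -> X} => (q \o k : {ptws X -> X})) @ nbhs p
    --> (p \o k : {ptws X -> X}).
Proof.
apply: ptws_cvg_coord => x /=.
exact: (@proj_continuous X (fun _ => X) (k x) p).
Qed.

Lemma ptws_lcomp_cvg (g : X -> X) (p : {ptws X -> X}) : continuous g ->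
  (fun q : {ptws X -> X} => (g \o q : {ptws X -> X})) @ nbhs p
    --> (g \o p : {ptws X -> X}).
Proof.
move=> cg; apply: ptws_cvg_coord => x /=.
apply: (@continuous_comp _ _ _ (fun q : {ptws X -> X} => q x) g); last exact: cg.
exact: (@proj_continuous X (fun _ => X) x p).
Qed.

End PointwiseComposition.

Section EllisSemigroup.
Set Implicit Arguments.
Variables (T : zmodType) (X : topologicalType) (s : T -> X -> X).
Hypothesis hs : continuous_action s.

Lemma Ellis_lcomp t phi : Ellis s phi -> Ellis s (s t \o phi).
Proof.
have [[_ s_add] s_cont] := hs.
apply: (@closure_image_sub {ptws X -> X}
  (fun q : {ptws X -> X} => (s t \o q : {ptws X -> X}))) => [p _|_ [_ [u _ <-] <-]].
  exact: ptws_lcomp_cvg.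
by exists (t + u)%R => //; apply: funext => x /=; rewrite s_add.
Qed.

Lemma Ellis_comp phi psi : Ellis s phi -> Ellis s psi -> Ellis s (phi \o psi).
Proof.
move=> Ephi Epsi.
have -> : Ellis s = @closure {ptws X -> X} (Ellis s).
  exact/(@closure_id {ptws X -> X})/closed_closure.
apply: (@closure_image_sub {ptws X -> X}
  (fun q : {ptws X -> X} => (q \o psi : {ptws X -> X})) (range s))
  => [p _|_ [_ [u _ <-] <-]|//].
  exact: ptws_rcomp_cvg.
exact: Ellis_lcomp.
Qed.

Variable e : X -> X.
Hypotheses (Ellis_e : Ellis s e) (e_idem : e \o e = e).

Local Notation L := (Lideal s e).
Local Notation G := (Egroup s e).

Lemma Lideal_Ellis f : L f -> Ellis s f.
Proof. by move=> [f' Ef' <-]; apply: Ellis_comp. Qed.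

Lemma Lideal_idem : L e.
Proof. by exists e. Qed.

Lemma Lideal_comp_idem f : L f -> f \o e = f.
Proof. by move=> [f' _ <-]; rewrite -compA e_idem. Qed.

Lemma Lideal_lcomp phi f : Ellis s phi -> L f -> L (phi \o f).
Proof. by move=> Ephi [f' Ef' <-]; exists (phi \o f') => //; apply: Ellis_comp. Qed.

Lemma Lideal_rcomp_idem phi : Ellis s phi -> L (phi \o e).
Proof. by exists phi. Qed.

Lemma Egroup_Lideal g : G g -> L g.
Proof. by move=> [a La <-]; apply: Lideal_lcomp. Qed.

Lemma Egroup_idem : G e.
Proof. by exists e; rewrite ?e_idem //; apply: Lideal_idem. Qed.

Lemma Egroup_idem_comp g : G g -> e \o g = g.
Proof. by move=> [a _ <-]; rewrite compA e_idem. Qed.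

Lemma Egroup_comp g k : G g -> G k -> G (g \o k).
Proof.
move=> [a La <-] Gk; exists (a \o k) => //.
by apply: Lideal_lcomp; [apply: Lideal_Ellis | apply: Egroup_Lideal].
Qed.

Variable I : set (X -> X).
Hypotheses (I_min : minimal_left_ideal s I) (I_e : I e).

Lemma Lideal_minimal : L = I.
Proof.
have [[I_Ellis [_ I_lcomp]] I_minimal] := I_min.
apply: I_minimal => [|_ [f Ef <-]]; last exact: I_lcomp.
split; first exact: Lideal_Ellis.
by split; [exists e; apply: Lideal_idem | move=> ??; apply: Lideal_lcomp].
Qed.

(* L \o a is a left ideal inside the minimal left ideal L, hence equals it and
   contains e. *)
Lemma Egroup_linv a : G a -> exists2 c, G c & c \o a = e.
Proof.
move=> Ga; have La := Egroup_Lideal Ga.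
pose J := [set phi \o a | phi in L].
have JL : J = L.
  have [_ I_minimal] := I_min; rewrite Lideal_minimal; apply: I_minimal.
    split=> [_ [phi Lphi <-]|].
      exact: Ellis_comp (Lideal_Ellis Lphi) (Lideal_Ellis La).
    split; first by exists (e \o a); exists e; [apply: Lideal_idem|].
    move=> phi _ Ephi [psi Lpsi <-].
    by exists (phi \o psi) => //; apply: Lideal_lcomp.
  rewrite -Lideal_minimal => _ [phi Lphi <-].
  exact: Lideal_lcomp (Lideal_Ellis Lphi) La.
have : J e by rewrite JL Lideal_minimal.
move=> [b Lb be]; exists (e \o b); first by exists b.
by rewrite -compA be e_idem.
Qed.

Lemma Egroup_rinv a c : G a -> G c -> c \o a = e -> a \o c = e.
Proof.
move=> Ga Gc ca; have [d Gd dc] := Egroup_linv Gc.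
have -> : a \o c = (d \o c) \o a \o c by rewrite dc Egroup_idem_comp.
have -> : (d \o c) \o a \o c = d \o ((c \o a) \o c) by [].
by rewrite ca Egroup_idem_comp.
Qed.

Section Factor.
Variables (Y : uniformType) (sY : T -> Y -> Y) (pi : (X -> X) -> Y).
Variables (add : Y -> Y -> Y) (opp : Y -> Y).
Hypotheses (pi_factor : factor_of_L s e sY pi)
  (Y_rotation : rotation_group_structure sY add opp (pi e)).

Let Y_haus : hausdorff_space Y.
Proof. by have [_ []] := pi_factor. Qed.
Let pi_cont :
  {within (L : set {ptws X -> X}), continuous (pi : {ptws X -> X} -> Y)}.
Proof. by have [_ [_ [_ []]]] := pi_factor. Qed.
Let pi_equiv t f : L f -> pi (s t \o f) = sY t (pi f).
Proof. by have [_ [_ [_ [_ [_]]]]] := pi_factor; apply. Qed.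
Let addA a b c : add a (add b c) = add (add a b) c.
Proof. by have [] := Y_rotation. Qed.
Let addC a b : add a b = add b a.
Proof. by have [_ []] := Y_rotation. Qed.
Let add0 a : add (pi e) a = a.
Proof. by have [_ [_ []]] := Y_rotation. Qed.
Let addN a : add (opp a) a = pi e.
Proof. by have [_ [_ [_ []]]] := Y_rotation. Qed.
Let add_cont : continuous (fun p : Y * Y => add p.1 p.2).
Proof. by have [_ [_ [_ [_ []]]]] := Y_rotation. Qed.
Let sY_transl t y : sY t y = add (sY t (pi e)) y.
Proof. by have [_ [_ [_ [_ [_ [_]]]]]] := Y_rotation; apply. Qed.

Let addr0 a : add a (pi e) = a.
Proof. by rewrite addC add0. Qed.
Let add_idem_neutral a : add a a = a -> a = pi e.
Proof. by move=> aa; rewrite -(addN a) -{3}aa addA addN add0. Qed.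

Lemma factor_rcomp_cvg (A : set (X -> X)) h (p : {ptws X -> X}) :
  L (p \o h) -> (forall q : X -> X, A q -> L (q \o h)) ->
  (fun q : {ptws X -> X} => pi (q \o h)) @ within A (nbhs p) --> pi (p \o h).
Proof.
move=> Lp AL; apply: (@within_comp_cvg {ptws X -> X} Y Y L A
  (fun q : {ptws X -> X} => (q \o h : {ptws X -> X})) pi id) => //.
exact: ptws_rcomp_cvg.
Qed.

Lemma factor_comp phi h : Ellis s phi -> L h ->
  pi (phi \o h) = add (pi (phi \o e)) (pi h).
Proof.
move=> Ephi Lh.
apply: (@hausdorff_eq_closure {ptws X -> X} Y (Ellis s) (range s) phi
  (fun q => pi (q \o h)) (fun q => add (pi (q \o e)) (pi h))) => //.
- exact: subset_closure.
- by apply: factor_rcomp_cvg => *; apply: Lideal_lcomp.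
- apply: (@within_comp_cvg {ptws X -> X} Y Y L (Ellis s)
    (fun q : {ptws X -> X} => (q \o e : {ptws X -> X})) pi (add^~ (pi h))).
  + exact: ptws_rcomp_cvg.
  + exact: pi_cont.
  + exact: Lideal_rcomp_idem.
  + by move=> q; apply: Lideal_rcomp_idem.
  + apply: (@continuous2_cvg _ Y Y Y _ _ id (fun=> pi h) add).
    * exact: (add_cont (pi (phi \o e), pi h)).
    * exact: cvg_id.
    * exact: cvg_cst.
- move=> _ /[!inE] -[t _ <-] /=.
  by rewrite pi_equiv // pi_equiv; [apply: sY_transl | apply: Lideal_idem].
Qed.

Lemma factor_morph f g : L f -> L g -> pi (f \o g) = add (pi f) (pi g).
Proof.
by move=> Lf Lg; rewrite factor_comp ?Lideal_comp_idem //; apply: Lideal_Ellis.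
Qed.

Lemma factor_idem_comp f : L f -> pi f = pi (e \o f).
Proof. by move=> Lf; rewrite factor_comp // e_idem add0. Qed.

Definition factor_kernel := [set h | G h /\ pi h = pi e].

Lemma factor_kernel_closed : exists C : set {ptws X -> X},
  closed C /\ factor_kernel = G `&` C.
Proof.
exists (@closure {ptws X -> X} factor_kernel); split; first exact: closed_closure.
apply/seteqP; split=> [h [Gh ph]|g [Gg cg]].
  by split => //; apply: subset_closure.
split => //; apply: (@hausdorff_eq_closure {ptws X -> X} Y L factor_kernel g
  pi (fun=> pi e)) => //.
- by move=> h [/Egroup_Lideal].
- by apply: (@factor_rcomp_cvg _ id) => //; apply: Egroup_Lideal.
- exact: cvg_cst.
- by move=> d /[!inE] -[].
Qed.

Lemma factor_kernel_normal : closed_normal_subgroup s e factor_kernel.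
Proof.
have morphG g k : G g -> G k -> pi (g \o k) = add (pi g) (pi k).
  by move=> Gg Gk; apply: factor_morph; apply: Egroup_Lideal.
split; first by move=> h [].
split; first exact: factor_kernel_closed.
split; first by split; first exact: Egroup_idem.
split=> [h k [Gh ph] [Gk pk]|].
  by split; [apply: Egroup_comp | rewrite morphG // ph pk addr0].
split=> [h g [Gh ph] Gg ghe|h g g' [Gh ph] Gg Gg' gge].
  by split => //; rewrite -(addr0 (pi g)) -ph -morphG // ghe.
have Ggh : G (g \o h) by apply: Egroup_comp.
split; first exact: Egroup_comp.
by rewrite morphG // morphG // ph addr0 -morphG // gge.
Qed.

(* pi (u \o e) is an idempotent of Y, hence neutral, whenever u \o u = u. *)
Lemma minidem_semigroup_factor f :
  minidem_semigroup s f -> Ellis s f /\ pi (f \o e) = pi e.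
Proof.
move=> /(_ [set f | Ellis s f /\ pi (f \o e) = pi e]); apply.
  move=> u [Eu [uu _]]; split => //; apply: add_idem_neutral.
  have := factor_comp Eu (Lideal_rcomp_idem Eu).
  by rewrite -[u \o (u \o e)]/((u \o u) \o e) uu => <-.
move=> a b [Ea pa] [Eb pb].
split; first exact: Ellis_comp.
rewrite -[a \o b \o e]/(a \o (b \o e)).
by rewrite (factor_comp Ea (Lideal_rcomp_idem Eb)) pa pb addr0.
Qed.

Lemma Gamma_sub_factor_kernel : Gamma s e `<=` factor_kernel.
Proof.
move=> g [Gg cg]; split => //.
have Lg := Egroup_Lideal Gg.
rewrite -(Lideal_comp_idem Lg).
apply: (@hausdorff_eq_closure {ptws X -> X} Y (Ellis s) (minidem_semigroup s) g
  (fun q => pi (q \o e)) (fun=> pi e)) => //.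
- by move=> f /minidem_semigroup_factor[].
- apply: factor_rcomp_cvg => [|q Eq]; first by rewrite Lideal_comp_idem.
  by exists q.
- exact: cvg_cst.
- by move=> d /[!inE] /minidem_semigroup_factor[].
Qed.

Lemma factor_fibres f g : L f -> L g ->
  pi f = pi g <-> exists2 h, factor_kernel h & e \o f = (e \o g) \o h.
Proof.
move=> Lf Lg; have Gef : G (e \o f) by exists f.
have Geg : G (e \o g) by exists g.
have morphG a b : G a -> G b -> pi (a \o b) = add (pi a) (pi b).
  by move=> Ga Gb; apply: factor_morph; apply: Egroup_Lideal.
split=> [pfg|[h [Gh ph] efh]]; last first.
  by rewrite (factor_idem_comp Lf) efh morphG // ph addr0 -factor_idem_comp.
have [c Gc ceg] := Egroup_linv Geg.
exists (c \o (e \o f)).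
  split; first exact: Egroup_comp.
  rewrite morphG // -(factor_idem_comp Lf) pfg (factor_idem_comp Lg).
  by rewrite -morphG // ceg.
by rewrite compA (Egroup_rinv Geg Gc ceg) compA e_idem.
Qed.

End Factor.
End EllisSemigroup.

Theorem mainTheorem2 (T : zmodType) (X : topologicalType) (s : T -> X -> X)
  (hX_compact : compact [set: X]) (hX_haus : hausdorff_space X)
  (hs_act : continuous_action s) (hs_min : minimal_action s)
  (hs_notdistal : ~ distal s)
  (e : X -> X) (he : minimal_idempotent s e)
  (Y : uniformType) (sY : T -> Y -> Y) (pi : (X -> X) -> Y)
  (hpi : max_equicontinuous_factor_of_L s e sY pi)
  (add : Y -> Y -> Y) (opp : Y -> Y)
  (hgrp : rotation_group_structure sY add opp (pi e)) :
  (forall f g, Lideal s e f -> Lideal s e g -> pi (f \o g) = add (pi f) (pi g)) /\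
  (forall f, Lideal s e f -> pi f = pi (e \o f)) /\
  exists H : set (X -> X),
    [/\ closed_normal_subgroup s e H,
        Gamma s e `<=` H &
        forall f g, Lideal s e f -> Lideal s e g ->
          (pi f = pi g <-> exists2 h, H h & e \o f = (e \o g) \o h)].
Proof.
have [[pi_factor _] _] := hpi.
have [Ellis_e [e_idem [I [I_min I_e]]]] := he.
split; first exact: (factor_morph hs_act Ellis_e e_idem pi_factor hgrp).
split; first exact: (factor_idem_comp hs_act Ellis_e e_idem pi_factor hgrp).
exists (factor_kernel _ _ s e _ pi); split.
- exact: (factor_kernel_normal hs_act Ellis_e e_idem pi_factor hgrp).
- exact: (Gamma_sub_factor_kernel hs_act Ellis_e e_idem pi_factor hgrp).
- exact: (factor_fibres hs_act Ellis_e e_idem I_min I_e pi_factor hgrp).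
Qed.
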